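(* Let $S$ be a quasi-tree of a map $\mathcal M$ and let $e$ be an edge of $\mathcal M$. If $e\in S$, then $\widetilde{\Lambda}(\mathcal M/ e, S\setminus \{e\})=\widetilde{\Lambda}(\mathcal M, S)- e$. If $e\notin S$, then $\widetilde{\Lambda}(\mathcal M\setminus e, S)=\widetilde{\Lambda}(\mathcal M, S)- e$.
   Context: A map is a triple $\mathcal M=(B,\sigma,\alpha)$ with $B$ finite, $\sigma,\alpha\in\mathrm{Sym}(B)$, $\alpha$ a fixed-point-free involution, $\langle\sigma,\alpha\rangle$ transitive on $B$; permutations compose as functions. Edges are the cycles of $\alpha$; $\underline b=\{b,\alpha(b)\}$. For $\mu\in\mathrm{Sym}(B)$, $B'\subseteq B$, $\mu_{|B'}(b)=\mu^k(b)$ with $k$ least positive such that $\mu^k(b)\in B'$. Deletion: $\mathcal M\setminus e=(B\setminus e,\sigma_{|B\setminus e},\alpha_{|B\setminus e})$; contraction: $\mathcal M/e=(B\setminus e,(\sigma\alpha)_{|B\setminus e}\alpha_{|B\setminus e},\alpha_{|B\setminus e})$. The tour of a set $F$ of edges is $\tau$ with $\tau(b)=\sigma(\alpha(b))$ if $\underline b\in F$ and $\tau(b)=\sigma(b)$ otherwise; a quasi-tree is a set of edges whose tour is a single cycle on the flag set. For a quasi-tree $S$ with tour $\tau$, $\widetilde\Lambda(\mathcal M,S)$ is the chord diagram with the flags placed on a circle in the cyclic order of $\tau$, a chord joining the two flags of each edge, chords of edges in $S$ colored $1$ and the others colored $2$. $\widetilde\Lambda(\mathcal M,S)-e$ denotes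 the bicolored chord diagram with the chord of $e$ removed. *)

From mathcomp Require Import all_boot.
Set Implicit Arguments. Unset Strict Implicit. Unset Printing Implicit Defensive.

Section Maps.
Variable T : finType.

(* mu_{|D}(b) = mu^k(b), k least positive with mu^k(b) \in D (for b \in D);
   identity outside D (normalisation). *)
Definition restr (mu : T -> T) (D : {set T}) (b : T) : T :=
  if b \in D then
    iter (find (fun k => iter k.+1 mu b \in D) (iota 0 #|T|)).+1 mu b
  else b.

(* A map: flag set B (a subset of the ambient finite type T), and
   permutations sigma, alpha of B (identity outside B). *)
Record cmap := Map { flags : {set T}; msigma : T -> T; malpha : T -> T }.

Definition is_perm_on (D : {set T}) (f : T -> T) : Prop :=
  {in D &, injective f} /\ {in D, forall b, f b \in D} /\
  (forall b, b \notin D -> f b = b).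

Definition is_map (M : cmap) : Prop :=
  [/\ is_perm_on (flags M) (msigma M), is_perm_on (flags M) (malpha M),
      {in flags M, forall b, malpha M (malpha M b) = b /\ malpha M b != b} &
      {in flags M &, forall b c,
          connect (fun x y => (y == msigma M x) || (y == malpha M x)) b c}].

Definition edge_of (M : cmap) (b : T) : {set T} := [set b; malpha M b].

Definition edges (M : cmap) : {set {set T}} :=
  [set edge_of M b | b in flags M].

Definition deletion (M : cmap) (e : {set T}) : cmap :=
  let D := flags M :\: e in
  Map D (restr (msigma M) D) (restr (malpha M) D).

Definition contraction (M : cmap) (e : {set T}) : cmap :=
  let D := flags M :\: e in
  Map D (fun b => restr (fun x => msigma M (malpha M x)) D (restr (malpha M) D b))
        (restr (malpha M) D).

Definition tour (M : cmap) (F : {set {set T}}) (b : T) : T :=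
  if b \in flags M then
    (if edge_of M b \in F then msigma M (malpha M b) else msigma M b)
  else b.

Definition is_quasi_tree (M : cmap) (S : {set {set T}}) : Prop :=
  S \subset edges M /\
  {in flags M &, forall b c, fconnect (tour M S) b c}.

(* Labelled bicoloured chord diagram: points (flags), the cyclic successor
   along the circle, the chord involution, and colours (1 or 2; 0 outside). *)
Record chord_diagram := CD {
  cd_pts : {set T};
  cd_next : {ffun T -> T};
  cd_chord : {ffun T -> T};
  cd_col : {ffun T -> nat} }.

Definition Lambda (M : cmap) (S : {set {set T}}) : chord_diagram :=
  CD (flags M)
     [ffun b => if b \in flags M then tour M S b else b]
     [ffun b => if b \in flags M then malpha M b else b]
     [ffun b => if b \in flags M then (if edge_of M b \in S then 1 else 2) else 0].

Definition cd_remove (L : chord_diagram) (e : {set T}) : chord_diagram :=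
  let D := cd_pts L :\: e in
  CD D
     [ffun b => if b \in D then restr (cd_next L) D b else b]
     [ffun b => if b \in D then cd_chord L b else b]
     [ffun b => if b \in D then cd_col L b else 0].

End Maps.

From mathcomp Require Import all_boot.
Set Implicit Arguments.
Unset Strict Implicit. Unset Printing Implicit Defensive.

(* Both circles are the first-return map ([restr]) of the tour τ of S to
   the flags off e: for the chord diagram this is how a chord is removed.
   For the minor, τ acts on the two flags of e as σα if e ∈ S and as σ if
   e ∉ S, so a τ-walk through e is a σα- resp. σ-walk through e, and the
   first-return maps of σα and σ are what contraction resp. deletion use.
   The cycles of a first-return map of a permutation are its cycles cut
   down to the target set, so the tour of the minor is again one cycle. *)

Section FirstReturn.
Variables (T : finType) (D : {set T}).
Implicit Types (g h : T -> T) (x : T).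

Lemma eq_restr g h : g =1 h -> restr g D =1 restr h D.
Proof.
move=> gh x; rewrite /restr; case: ifP => // _.
rewrite (eq_find (a2 := fun k => iter k.+1 h x \in D)) ?(eq_iter gh) // => k.
by rewrite /= -!iterS (eq_iter gh).
Qed.

Lemma restr_iter g x j : x \in D -> 0 < j <= #|T| -> iter j g x \in D ->
  (forall i, 0 < i < j -> iter i g x \notin D) -> restr g D x = iter j g x.
Proof.
move=> xD /andP[j_gt0 j_le] gjx before_j; rewrite /restr xD.
case: (findP _ (iota 0 #|T|)) => [noret|i]; rewrite size_iota.
  case/negP: noret; apply/hasP; exists j.-1; last by rewrite prednK.
  by rewrite mem_iota add0n (leq_trans _ j_le) // ltn_predL.
move=> i_lt /(_ 0); rewrite nth_iota // add0n => gix before_i.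
have [ij|ji|-> //] := ltngtP i.+1 j.
  by move: gix; rewrite (negbTE (before_j i.+1 ij)).
have ji' : j.-1 < i by rewrite -ltnS prednK.
have := before_i 0 j.-1 ji'; rewrite nth_iota ?add0n ?prednK ?gjx //.
Qed.

Lemma restr_first g x : x \in D -> g x \in D -> restr g D x = g x.
Proof.
move=> xD gxD; apply: (restr_iter (j := 1)) => //; last by case=> [|[]].
by apply/card_gt0P; exists x.
Qed.

Variable f : T -> T.
Hypothesis f_inj : injective f.

Lemma restr_first_return x : x \in D ->
  exists2 j, 0 < j <= #|T| & [/\ iter j f x \in D,
    forall i, 0 < i < j -> iter i f x \notin D & restr f D x = iter j f x].
Proof.
move=> xD; have returns : exists j, (0 < j) && (iter j f x \in D).
  by exists (order f x); rewrite order_gt0 iter_order.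
case: (ex_minnP returns) => j /andP[j_gt0 fjx] j_min.
have before_j i : 0 < i < j -> iter i f x \notin D.
  case/andP=> i_gt0 ij; apply: contraTN ij => fiD.
  by rewrite -leqNgt j_min // i_gt0 fiD.
have j_le : j <= #|T|.
  rewrite (leq_trans (j_min (order f x) _) (max_card _)) //.
  by rewrite order_gt0 iter_order.
have restr_x : restr f D x = iter j f x by apply: restr_iter; rewrite ?j_gt0.
by exists j; rewrite ?j_gt0.
Qed.

(* After their first steps, which land at the same point, the two walks
   coincide until they re-enter [D]. *)
Lemma restr_transfer tau b x : (forall c, c \notin D -> tau c = f c) ->
  b \in D -> x \in D -> tau b = f x -> restr tau D b = restr f D x.
Proof.
move=> tau_f bD xD tau_b.
have [j /andP[j_gt0 j_le] [fjx before_j ->]] := restr_first_return xD.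
have iter_tau i : 0 < i <= j -> iter i tau b = iter i f x.
  elim: i => // -[_ _ //|i IHi /andP[_ ij]].
  rewrite iterS IHi ?(ltnW ij) // tau_f //.
  by apply: before_j; rewrite ltn0Sn.
rewrite -iter_tau ?j_gt0 ?leqnn //.
apply: (restr_iter bD); rewrite ?iter_tau ?j_gt0 ?leqnn //.
move=> i /andP[i_gt0 ij].
by rewrite iter_tau ?i_gt0 ?(ltnW ij) ?before_j ?i_gt0.
Qed.

Lemma fconnect_restr b c :
  b \in D -> c \in D -> fconnect f b c -> fconnect (restr f D) b c.
Proof.
move=> bD cD /iter_findex; move: (findex f b c) => n.
elim/ltn_ind: n b bD => n IHn b bD.
have [j /andP[j_gt0 _] [fjb before_j restr_b]] := restr_first_return bD.
case: n IHn => [_ <-|n IHn fnb]; first exact: connect0.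
have jn : j <= n.+1.
  by rewrite leqNgt; apply: contraL cD => nj; rewrite -fnb before_j.
apply: connect_trans (fconnect1 _ b) _; rewrite restr_b.
apply: (IHn (n.+1 - j)) fjb _; first by rewrite ltn_subrL j_gt0.
by rewrite -iterD subnK.
Qed.

End FirstReturn.

Lemma perm_on_inj (T : finType) (B : {set T}) (f : T -> T) :
  is_perm_on B f -> injective f.
Proof.
case=> f_inj [fB f_out] x y.
have [xB|xNB] := boolP (x \in B); have [yB|yNB] := boolP (y \in B).
- exact: f_inj.
- by rewrite (f_out y) // => fxy; move: (fB x xB); rewrite fxy (negbTE yNB).
- by rewrite (f_out x) // => fxy; move: (fB y yB); rewrite -fxy (negbTE xNB).
- by rewrite !f_out.
Qed.

Section EdgeRemoval.
Variables (T : finType) (M : cmap T).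
Hypothesis M_map : is_map M.
Local Notation B := (flags M).
Local Notation sigma := (msigma M).
Local Notation alpha := (malpha M).

Lemma sigma_inj : injective sigma.
Proof. by case: M_map => /perm_on_inj. Qed.

Lemma alpha_inj : injective alpha.
Proof. by case: M_map => _ /perm_on_inj. Qed.

Lemma sigma_out b : b \notin B -> sigma b = b.
Proof. by case: M_map => [[_ [_ sigma_out]] _ _ _] /sigma_out. Qed.

Lemma alpha_out b : b \notin B -> alpha b = b.
Proof. by case: M_map => _ [_ [_ alpha_out]] _ _ /alpha_out. Qed.

Lemma alphaK : involutive alpha.
Proof.
move=> b; have [bB|bNB] := boolP (b \in B); last by rewrite !alpha_out.
by case: M_map => _ _ /(_ b bB)[-> _].
Qed.

Lemma mem_alpha b : (alpha b \in B) = (b \in B).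
Proof.
case: M_map => _ [_ [alphaB _]] _ _.
by apply/idP/idP => [/alphaB|/alphaB //]; rewrite alphaK.
Qed.

Lemma edge_of_alpha b : edge_of M (alpha b) = edge_of M b.
Proof. by apply/setP => c; rewrite /edge_of alphaK !inE orbC. Qed.

Lemma tour_inj S : injective (tour M S).
Proof.
pose flip b := if (b \in B) && (edge_of M b \in S) then alpha b else b.
have flipK : involutive flip.
  move=> b; rewrite /flip; case bB: (b \in B); rewrite /= ?bB //.
  case ES: (edge_of M b \in S) => /=; last by rewrite bB ES.
  by rewrite mem_alpha edge_of_alpha bB ES alphaK.
apply: eq_inj (inj_comp sigma_inj (can_inj flipK)) _ => b.
rewrite /tour /flip /=; case bB: (b \in B) => /=; first by case: ifP.
by rewrite sigma_out ?bB.
Qed.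

Variable a : T.
Local Notation e := (edge_of M a).
Local Notation D := (B :\: edge_of M a).

Lemma mem_D_alpha b : (alpha b \in D) = (b \in D).
Proof.
rewrite !inE mem_alpha (inj_eq alpha_inj) (can2_eq alphaK alphaK).
by rewrite (orbC (b == a)).
Qed.

Lemma restr_alpha b : b \in D -> restr alpha D b = alpha b.
Proof. by move=> bD; rewrite restr_first ?mem_D_alpha. Qed.

Lemma edge_of_restr (M' : cmap T) b :
  malpha M' = restr alpha D -> b \in D -> edge_of M' b = edge_of M b.
Proof. by rewrite /edge_of => -> bD; rewrite restr_alpha. Qed.

Lemma edge_of_D b : b \in D -> edge_of M b != e.
Proof. by move=> bD; apply: contraTneq bD => <-; rewrite !inE eqxx. Qed.

Lemma edge_of_notD b : b \in B -> b \notin D -> edge_of M b = e.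
Proof.
move=> bB; rewrite in_setD bB andbT negbK !inE.
by case/orP=> /eqP ->; rewrite ?edge_of_alpha.
Qed.

Lemma tour_notD S b :
  b \notin D -> tour M S b = if e \in S then sigma (alpha b) else sigma b.
Proof.
move=> bD; rewrite /tour; have [bB|bNB] := boolP (b \in B).
  by rewrite edge_of_notD.
by rewrite alpha_out // sigma_out //; case: ifP.
Qed.

Section Minor.
Variables (S : {set {set T}}) (M' : cmap T).
Hypotheses (tour_M' : tour M' (S :\ e) =1 restr (tour M S) D)
  (flags_M' : flags M' = D) (alpha_M' : malpha M' = restr alpha D).

Lemma quasi_tree_minor : is_quasi_tree M S -> is_quasi_tree M' (S :\ e).
Proof.
case=> S_edges S_cycle; split.
  apply/subsetP => E /setD1P[Ee /(subsetP S_edges)/imsetP[c cB defE]].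
  have cD : c \in D by apply: contraR Ee => cND; rewrite defE edge_of_notD.
  by rewrite defE -(edge_of_restr alpha_M' cD) /edges flags_M' imset_f.
rewrite flags_M' => b c bD cD; rewrite (eq_fconnect tour_M').
apply: (fconnect_restr (@tour_inj S) bD cD).
by apply: S_cycle; [case/setDP: bD | case/setDP: cD].
Qed.

Lemma Lambda_minor : Lambda M' (S :\ e) = cd_remove (Lambda M S) e.
Proof.
rewrite /Lambda /cd_remove /= flags_M'; congr CD; apply/ffunP => b;
  rewrite !ffunE; case: ifP => // bD; have bB : b \in B by case/setDP: bD.
- rewrite tour_M'; apply: eq_restr => c; rewrite ffunE.
  by case: ifP => // /negbT cNB; rewrite /tour (negbTE cNB).
- by rewrite alpha_M' restr_alpha // bB.
- by rewrite (edge_of_restr alpha_M' bD) in_setD1 edge_of_D // bB.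
Qed.

End Minor.

Lemma tour_deletion (S : {set {set T}}) :
  e \notin S -> tour (deletion M e) S =1 restr (tour M S) D.
Proof.
move=> eNS b; rewrite {1}/tour /=; case: ifP => bD; last by rewrite /restr bD.
have bB : b \in B by case/setDP: bD.
have tour_off c : c \notin D -> tour M S c = sigma c.
  by move=> cND; rewrite tour_notD // (negbTE eNS).
rewrite (edge_of_restr (M' := deletion M e) erefl bD).
case: ifP => bS; symmetry.
  rewrite restr_alpha //; apply: (restr_transfer sigma_inj tour_off bD).
    by rewrite mem_D_alpha.
  by rewrite /tour bB bS.
by apply: (restr_transfer sigma_inj tour_off bD bD); rewrite /tour bB bS.
Qed.

Lemma tour_contraction (S : {set {set T}}) :
  e \in S -> tour (contraction M e) (S :\ e) =1 restr (tour M S) D.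
Proof.
move=> eS b; rewrite {1}/tour /=; case: ifP => bD; last by rewrite /restr bD.
have bB : b \in B by case/setDP: bD.
have sa_inj : injective (fun c => sigma (alpha c)).
  exact: inj_comp sigma_inj alpha_inj.
have tour_off c : c \notin D -> tour M S c = sigma (alpha c).
  by move=> cND; rewrite tour_notD // eS.
rewrite (edge_of_restr (M' := contraction M e) erefl bD).
rewrite in_setD1 (edge_of_D bD) /=.
rewrite (restr_alpha bD); case: ifP => bS; symmetry.
  rewrite restr_alpha ?mem_D_alpha // alphaK.
  by apply: (restr_transfer sa_inj tour_off bD bD); rewrite /tour bB bS.
apply: (restr_transfer sa_inj tour_off bD); first by rewrite mem_D_alpha.
by rewrite /tour bB bS alphaK.
Qed.

End EdgeRemoval.

Theorem lemma10 (T : finType) (M : cmap T) (S : {set {set T}}) (e : {set T}) :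
  is_map M -> is_quasi_tree M S -> e \in edges M ->
  (e \in S ->
     is_quasi_tree (contraction M e) (S :\ e) /\
     Lambda (contraction M e) (S :\ e) = cd_remove (Lambda M S) e) /\
  (e \notin S ->
     is_quasi_tree (deletion M e) S /\
     Lambda (deletion M e) S = cd_remove (Lambda M S) e).
Proof.
move=> M_map S_qt /imsetP[a _ ->]; split=> eS.
  have tourC := tour_contraction M_map eS.
  split; first exact: quasi_tree_minor tourC _ _ S_qt.
  exact: Lambda_minor tourC erefl erefl.
have SeS : S :\ edge_of M a = S.
  by apply/setDidPl; rewrite disjoint_sym disjoints1.
have := tour_deletion M_map eS; rewrite -{1}SeS => tourD; rewrite -{1 2}SeS.
split; first exact: quasi_tree_minor tourD _ _ S_qt.
exact: Lambda_minor tourD erefl erefl.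
Qed.
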